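(* Let $n\ge 3$. There exist infinitely many profiles $\mathbf{p}\in\mathbb{Q}^{n!}$ such that for every permutation $\pi\in S_n$ with $\pi(n)\neq 1$, there is some $\mathbf{w}(\pi)\in W$ with $T_{\mathbf{w}(\pi)}\mathbf{p}\in C_\pi$.
   Context: Work over $\mathbb{Q}$. Let $W=\{\mathbf{x}\in\mathbb{Q}^n : x_1>x_2>\cdots>x_n,\ x_1+\cdots+x_n=0\}$ (strict weighting vectors). For $\pi\in S_n$, let $C_\pi=\{\mathbf{x}\in\mathbb{Q}^n : x_{\pi(1)}>x_{\pi(2)}>\cdots>x_{\pi(n)}\}$. Label the permutations of $S_n$ as $\sigma_1,\dots,\sigma_{n!}$ in lexicographic order of one-line notation, and let $R_\ell$ be the $n\times n$ permutation matrix with $R_\ell(i,j)=1$ if $\sigma_\ell(j)=i$ and $0$ otherwise. For a weighting vector $\mathbf{w}$, $T_{\mathbf{w}}$ is the $n\times n!$ matrix whose $\ell$-th column is $R_\ell\mathbf{w}$, so for a profile $\mathbf{p}\in\mathbb{Q}^{n!}$ (where $p_\ell$ is the number of voters with preference $\sigma_\ell$, candidate $\sigma_\ell(k)$ being ranked $k$-th), $T_{\mathbf{w}}\mathbf{p}=\sum_{\ell=1}^{n!}p_\ell R_\ell\mathbf{w}$ is the results vector. *)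

From HB Require Import structures.
From mathcomp Require Import all_boot all_order all_algebra all_fingroup.
Set Implicit Arguments. Unset Strict Implicit. Unset Printing Implicit Defensive.
Import Order.TTheory GRing.Theory Num.Theory.

(* Candidates 1..n are represented by 'I_n (candidate k <-> index k-1).
   Permutations of S_n are {perm 'I_n}. *)

Fixpoint lex_leq (s t : seq nat) : bool :=
  match s, t with
  | [::], _ => true
  | _ :: _, [::] => false
  | x :: s', y :: t' => (x < y) || ((x == y) && lex_leq s' t')
  end.

Definition oneline (n : nat) (s : {perm 'I_n}) : seq nat :=
  [seq val (s i) | i <- enum 'I_n].

Definition perm_lex (n : nat) (s t : {perm 'I_n}) : bool :=
  lex_leq (oneline s) (oneline t).

Definition lex_perms (n : nat) : seq {perm 'I_n} :=
  sort (@perm_lex n) (enum [set: {perm 'I_n}]).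

(* sigma_l, for l = 1..n! (here l : 'I_(n`!), 0-indexed) *)
Definition sigma_l (n : nat) (l : 'I_(n`!)) : {perm 'I_n} :=
  nth 1%g (lex_perms n) l.

Local Open Scope ring_scope.

Definition Rmat (n : nat) (l : 'I_(n`!)) : 'M[rat]_n :=
  \matrix_(i < n, j < n) (if sigma_l l j == i then 1 else 0).

Definition Tmat (n : nat) (w : 'cV[rat]_n) : 'M[rat]_(n, n`!) :=
  \matrix_(i < n, l < n`!) (Rmat l *m w) i 0.

Definition in_W (n : nat) (x : 'cV[rat]_n) : Prop :=
  (forall i j : 'I_n, (i < j)%N -> x j 0 < x i 0) /\ \sum_(i < n) x i 0 = 0.

Definition in_C (n : nat) (pi : {perm 'I_n}) (x : 'cV[rat]_n) : Prop :=
  forall i j : 'I_n, (i < j)%N -> x (pi j) 0 < x (pi i) 0.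

From HB Require Import structures.
From mathcomp Require Import all_boot all_order all_algebra all_fingroup.
From mathcomp Require Import lra ring.
(* The profile combines a
   cyclic-shift ballot with pairs of ballots differing by transpositions, so that
   for any weighting vector w candidate 1 scores w_1 - w_n while every other
   candidate i scores n(2n-3)(w_{i-1} - w_i) - (2n-1)(w_1 - w_n).  Hence i beats
   candidate 1 exactly when its gap w_{i-1} - w_i exceeds 2/(2n-3) of the spread
   w_1 - w_n.  The gaps of a strict weighting vector are arbitrary positive
   numbers, so a ranking is realised by gaps that are large for the candidates
   ranked above candidate 1, moderate for those below it, and decreasing along
   the ranking.  At least one gap has to stay below the threshold (n-1 gaps above
   it would sum to more than the spread), which is why candidate 1 must not be
   ranked last.  Positive multiples of this profile give infinitely many. *)

Set Implicit Arguments.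
Unset Strict Implicit.
Unset Printing Implicit Defensive.

Import Order.TTheory GRing.Theory Num.Theory.
Local Open Scope ring_scope.

Lemma sum_sigma_l n (F : {perm 'I_n} -> rat) :
  \sum_(l < n`!) F (sigma_l l) = \sum_s F s.
Proof.
have size_lex : size (lex_perms n) = n`!.
  by rewrite size_sort -cardE cardsT card_Sn.
have -> : \sum_(l < n`!) F (sigma_l l) = \sum_(s <- lex_perms n) F s.
  by rewrite (big_nth 1%g) size_lex big_mkord.
rewrite (perm_big (enum [set: {perm 'I_n}])) ?perm_sort // big_enum.
by apply: eq_bigl => s; rewrite inE.
Qed.

Lemma Rmat_mulmx n (l : 'I_(n`!)) (w : 'cV[rat]_n) (i : 'I_n) :
  (Rmat l *m w) i 0 = w ((sigma_l l)^-1 i)%g 0.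
Proof.
rewrite !mxE (bigD1 ((sigma_l l)^-1 i)%g) //= mxE permKV eqxx mul1r big1 ?addr0 //.
move=> j; rewrite mxE; case: (sigma_l l j =P i) => [<-|_]; last by rewrite mul0r.
by rewrite permK eqxx.
Qed.

Definition ballot n (s : {perm 'I_n}) : 'cV[rat]_(n`!) :=
  \col_l (sigma_l l == s)%:R.

Lemma Tmat_ballot n (w : 'cV[rat]_n) (s : {perm 'I_n}) :
  Tmat w *m ballot s = \col_i w ((s^-1)%g i) 0.
Proof.
apply/matrixP => i j; rewrite (ord1 j) [RHS]mxE mxE.
rewrite (eq_bigr (fun l => (sigma_l l == s)%:R * w ((sigma_l l)^-1 i)%g 0));
  last by move=> l _; rewrite [Tmat w i l]mxE Rmat_mulmx mxE mulrC.
rewrite (sum_sigma_l (fun t => (t == s)%:R * w (t^-1 i)%g 0)) (bigD1 s) //=.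
by rewrite eqxx mul1r big1 ?addr0 // => t /negbTE ->; rewrite mul0r.
Qed.

Section Profile.

Variable m : nat.
Local Notation n := m.+1.

(* Given by its inverse: by [Tmat_ballot], candidate [i] receives [w (ord_pred i)]. *)
Definition cycle_ballot : {perm 'I_n} := ((perm (@ord_pred_inj n))^-1)%g.

Definition swap_ballot (b : 'I_n) : {perm 'I_n} := tperm b ord_max.

Definition swap0_ballot (b : 'I_n) : {perm 'I_n} :=
  ((tperm ord0 b * tperm b ord_max)^-1)%g.

Definition profile (k1 k2 : rat) : 'cV[rat]_(n`!) :=
  k1 *: (ballot cycle_ballot - ballot 1) +
  k2 *: \sum_(b | b != ord0) (ballot (swap_ballot b) - ballot (swap0_ballot b)).

Lemma swap_ballot_diff (w : 'cV[rat]_n) (b i : 'I_n) : b != ord0 ->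
  w ((swap_ballot b)^-1 i)%g 0 - w ((swap0_ballot b)^-1 i)%g 0 =
  (w ord0 0 - w ord_max 0) * ((i == ord0)%:R - (i == b)%:R).
Proof.
move=> b_neq0; have max_neq0 : ord_max != ord0 :> 'I_n.
  by rewrite -val_eqE /= -lt0n (leq_trans _ (leq_ord b)) // lt0n; exact: b_neq0.
rewrite /swap_ballot /swap0_ballot tpermV invgK permM.
case: (tpermP ord0 b i) => [->|->|i_neq0 i_neqb].
- by rewrite tpermL tpermD // eqxx eq_sym (negbTE b_neq0) subr0 mulr1.
- by rewrite tpermL tpermD // eqxx (negbTE b_neq0) sub0r mulrN1 opprB.
- by move/eqP/negbTE: i_neq0 => ->; move/eqP/negbTE: i_neqb => ->; rewrite subrr mulr0.
Qed.

Lemma sum_indicator_diff (i : 'I_n) :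
  \sum_(b | b != ord0) ((i == ord0)%:R - (i == b)%:R : rat) = (i == ord0)%:R * n%:R - 1.
Proof.
rewrite sumrB sumr_const cardC1 card_ord /=.
case: eqVneq => [->|i_neq0].
  rewrite big1 => [|b]; last by rewrite eq_sym => /negbTE ->.
  by rewrite mul1r subr0 -natr1 addrK.
rewrite (bigD1 i) //= eqxx big1 => [|b /andP[_]]; last by rewrite eq_sym => /negbTE ->.
by rewrite mul0rn mul0r addr0 sub0r.
Qed.

Lemma Tmat_profile (k1 k2 : rat) (w : 'cV[rat]_n) (i : 'I_n) :
  (Tmat w *m profile k1 k2) i 0 =
  k1 * (w (ord_pred i) 0 - w i 0) +
  k2 * ((w ord0 0 - w ord_max 0) * ((i == ord0)%:R * n%:R - 1)).
Proof.
rewrite mulmxDr -!scalemxAr mulmxBr mulmx_sumr !Tmat_ballot.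
under eq_bigr do rewrite mulmxBr !Tmat_ballot.
rewrite !mxE summxE invgK permE invg1 perm1; congr (_ + _ * _).
rewrite -sum_indicator_diff mulr_sumr; apply: eq_bigr => b b_neq0.
by rewrite !mxE swap_ballot_diff.
Qed.

Definition center (u : 'I_n -> rat) : 'cV[rat]_n :=
  \col_i (u i - (\sum_k u k) / n%:R).

Lemma center_diff (u : 'I_n -> rat) (i j : 'I_n) :
  center u i 0 - center u j 0 = u i - u j.
Proof. by rewrite !mxE; ring. Qed.

Lemma in_W_center (u : 'I_n -> rat) :
  (forall i j : 'I_n, (i < j)%N -> u j < u i) -> in_W (center u).
Proof.
move=> u_decr; split=> [i j lt_ij|].
  by rewrite -subr_gt0 center_diff subr_gt0 u_decr.
under eq_bigr do rewrite mxE.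
by rewrite sumrB sumr_const card_ord -[(_ / _) *+ _]mulr_natr divfK ?subrr ?pnatr_eq0.
Qed.

Section SuffixSums.

Variable gap : 'I_n -> rat.

Definition suffix_sum (i : 'I_n) : rat := \sum_(j : 'I_n | (i < j)%N) gap j.

Lemma suffix_sum_max : suffix_sum ord_max = 0.
Proof. by rewrite /suffix_sum big_pred0 // => j; rewrite ltnNge leq_ord. Qed.

Lemma suffix_sum_pred (i : 'I_n) : i != ord0 ->
  suffix_sum (ord_pred i) - suffix_sum i = gap i.
Proof.
move=> i_neq0; have i_gt0 : (0 < i)%N by rewrite lt0n.
have pred_i : val (ord_pred i) = i.-1.
  rewrite /= -[in (i + _)%N](prednK i_gt0) addSn modnDr modn_small //.
  exact: leq_ltn_trans (leq_pred _) (ltn_ord i).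
rewrite /suffix_sum pred_i (bigD1 i) /= ?prednK //.
rewrite (eq_bigl (fun j : 'I_n => (i < j)%N)) ?addrK // => j.
by rewrite ltn_neqAle andbC -val_eqE eq_sym.
Qed.

Hypothesis gap_gt0 : forall i, 0 < gap i.

Lemma suffix_sum_decr (i j : 'I_n) : (i < j)%N -> suffix_sum j < suffix_sum i.
Proof.
move=> lt_ij.
have -> : suffix_sum i = suffix_sum j + \sum_(k : 'I_n | (i < k <= j)%N) gap k.
  rewrite /suffix_sum (bigID (fun k : 'I_n => (j < k)%N)) /=.
  congr (_ + _); apply: eq_bigl => k; last by rewrite -leqNgt.
  by apply/andb_idl => /(ltn_trans lt_ij).
rewrite ltrDl (bigD1 j) /= ?lt_ij ?leqnn // ltr_pwDl // sumr_ge0 // => k _.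
exact: ltW.
Qed.

Lemma Tmat_suffix_profile_ord0 (k1 k2 : rat) :
  (Tmat (center suffix_sum) *m profile k1 k2) ord0 0 =
  (k2 * m%:R - k1) * suffix_sum ord0.
Proof.
have pred0 : ord_pred ord0 = ord_max :> 'I_n by apply/val_inj; rewrite /= modn_small.
rewrite Tmat_profile pred0 !center_diff suffix_sum_max eqxx mul1r -natr1; ring.
Qed.

Lemma Tmat_suffix_profile_neq0 (k1 k2 : rat) (i : 'I_n) : i != ord0 ->
  (Tmat (center suffix_sum) *m profile k1 k2) i 0 =
  k1 * gap i - k2 * suffix_sum ord0.
Proof.
move=> i_neq0; rewrite Tmat_profile !center_diff suffix_sum_pred // suffix_sum_max.
by rewrite (negbTE i_neq0) mul0r; ring.
Qed.

End SuffixSums.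

Local Notation N := (n%:R : rat).

Definition universal_profile : 'cV[rat]_(n`!) :=
  profile (N * (2 * N - 3)) (2 * N - 1).

Lemma sum_pos_const (c : rat) : \sum_(j : 'I_n | (0 < j)%N) c = m%:R * c.
Proof. by rewrite big_mkcond big_ord_recl /= add0r sumr_const card_ord mulr_natl. Qed.

Section Ranking.

Hypothesis m_ge2 : (2 <= m)%N.
Variable pi : {perm 'I_n}.
Hypothesis pi_max : pi ord_max != ord0.

Let rank (j : 'I_n) : nat := (pi^-1)%g j.
Let above (j : 'I_n) : rat := (rank j < rank ord0)%N%:R.

Definition rank_gap (j : 'I_n) : rat :=
  4 * N ^+ 2 * above j + 2 * N ^+ 2 + (N - (rank j)%:R).

Lemma rank_gap_bounds (j : 'I_n) :
  4 * N ^+ 2 * above j + 2 * N ^+ 2 + 1 <= rank_gap j <=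
  4 * N ^+ 2 * above j + 2 * N ^+ 2 + N.
Proof.
have : (rank j)%:R <= m%:R :> rat by rewrite ler_nat leq_ord.
have : 0 <= (rank j)%:R :> rat by [].
by rewrite /rank_gap -[N]natr1 => *; apply/andP; split; lra.
Qed.

Lemma rank_gap_gt0 (j : 'I_n) : 0 < rank_gap j.
Proof.
have /andP[lo _] := rank_gap_bounds j; apply: lt_le_trans lo.
by rewrite -addrA ltr_wpDl ?ltr_wpDl ?mulr_ge0 ?sqr_ge0 ?ler0n.
Qed.

Lemma rank_gap_decr (i j : 'I_n) : (rank i < rank j)%N -> rank_gap j < rank_gap i.
Proof.
move=> lt_ij; rewrite /rank_gap -!addrA; apply: ler_ltD.
  rewrite ler_wpM2l ?mulr_ge0 ?ler0n // /above ler_nat.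
  by case: ltnP => // /(ltn_trans lt_ij) ->.
by rewrite !ltrD2l ltrN2 ltr_nat.
Qed.

Let total : rat := suffix_sum rank_gap ord0.

Lemma count_above : \sum_(j : 'I_n | (0 < j)%N) above j <= N - 2.
Proof.
set jb := pi ord_max.
have jb_gt0 : (0 < jb)%N by rewrite lt0n.
have below_jb : above jb = 0.
  by rewrite /above /rank /jb permK ltnNge -ltnS ltn_ord.
rewrite (bigD1 jb) //= below_jb add0r.
have := sum_pos_const 1; rewrite (bigD1 jb) //= mulr1 -[N]natr1.
suff : \sum_(j : 'I_n | (0 < j)%N && (j != jb)) above j <=
       \sum_(j : 'I_n | (0 < j)%N && (j != jb)) 1 by lra.
by apply: ler_sum => j _; rewrite /above; case: (_ < _)%N.
Qed.

Lemma total_lo : (N - 1) * (2 * N ^+ 2 + 1) <= total.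
Proof.
have -> : N - 1 = m%:R by rewrite -[N]natr1 addrK.
rewrite -sum_pos_const; apply: ler_sum => j _.
have /andP[+ _] := rank_gap_bounds j; apply: le_trans.
by rewrite -addrA lerDr mulr_ge0 ?mulr_ge0 ?sqr_ge0 ?ler0n.
Qed.

Lemma total_hi : total <= (N - 2) * (4 * N ^+ 2) + (N - 1) * (2 * N ^+ 2 + N).
Proof.
apply: (@le_trans _ _
  (\sum_(j : 'I_n | (0 < j)%N) (4 * N ^+ 2 * above j + (2 * N ^+ 2 + N)))).
  by apply: ler_sum => j _; rewrite addrA; have /andP[_ ->] := rank_gap_bounds j.
have -> : N - 1 = m%:R by rewrite -[N]natr1 addrK.
rewrite big_split /= -mulr_sumr sum_pos_const lerD2r mulrC.
by rewrite ler_wpM2r ?count_above ?mulr_ge0 ?sqr_ge0.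
Qed.

Lemma N_ge3 : 3 <= N.
Proof. by rewrite (ler_nat _ 3). Qed.

Lemma rank_gap_above (j : 'I_n) :
  (rank j < rank ord0)%N -> 2 * total < (2 * N - 3) * rank_gap j.
Proof.
move=> lt_j; have /andP[lo _] := rank_gap_bounds j.
rewrite /above lt_j mulr1 in lo.
have := total_hi; have := N_ge3; nra.
Qed.

Lemma rank_gap_below (j : 'I_n) :
  (rank ord0 < rank j)%N -> (2 * N - 3) * rank_gap j < 2 * total.
Proof.
move=> lt_j; have /andP[_ hi] := rank_gap_bounds j.
rewrite /above ltnNge (ltnW lt_j) mulr0 add0r in hi.
have := total_lo; have := N_ge3; nra.
Qed.

Let weights : 'cV[rat]_n := center (suffix_sum rank_gap).

Lemma universal_profile_ord0 : (Tmat weights *m universal_profile) ord0 0 = total.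
Proof. by rewrite Tmat_suffix_profile_ord0 -[N]natr1 /total; ring. Qed.

Lemma universal_profile_neq0 (i : 'I_n) : i != ord0 ->
  (Tmat weights *m universal_profile) i 0 =
  N * (2 * N - 3) * rank_gap i - (2 * N - 1) * total.
Proof. exact: Tmat_suffix_profile_neq0. Qed.

Lemma in_C_universal_profile : in_C pi (Tmat weights *m universal_profile).
Proof.
move=> a b lt_ab; have rank_pi k : rank (pi k) = k by rewrite /rank permK.
have N_gt0 : 0 < N by [].
have N3 := N_ge3.
case: (eqVneq (pi a) ord0) => [pia0|pia_neq0].
  have pib_neq0 : pi b != ord0 by rewrite -pia0 (inj_eq perm_inj) eq_sym neq_ltn lt_ab.
  rewrite pia0 universal_profile_ord0 universal_profile_neq0 //.
  have := @rank_gap_below (pi b); rewrite -pia0 !rank_pi => /(_ lt_ab); nra.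
case: (eqVneq (pi b) ord0) => [pib0|pib_neq0].
  rewrite pib0 universal_profile_ord0 universal_profile_neq0 //.
  have := @rank_gap_above (pi a); rewrite -pib0 !rank_pi => /(_ lt_ab); nra.
rewrite !universal_profile_neq0 // ltrD2r ltr_pM2l ?mulr_gt0 ?subr_gt0 //; last by lra.
by apply: rank_gap_decr; rewrite !rank_pi.
Qed.

Lemma universal_profile_ranks :
  exists w, in_W w /\ in_C pi (Tmat w *m universal_profile).
Proof.
exists weights; split; last exact: in_C_universal_profile.
by apply: in_W_center; apply: suffix_sum_decr; apply: rank_gap_gt0.
Qed.

End Ranking.

End Profile.

Lemma in_C_scale n (pi : {perm 'I_n}) (x : 'cV[rat]_n) (k : rat) :
  0 < k -> in_C pi x -> in_C pi (k *: x).
Proof. by move=> k_gt0 Cx i j lt_ij; rewrite !mxE ltr_pM2l // Cx. Qed.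

Lemma in_C_neq0 n (pi : {perm 'I_n}) (x : 'cV[rat]_n) :
  (1 < n)%N -> in_C pi x -> x != 0.
Proof.
move=> n_gt1 Cx; apply/eqP => x0.
by have := Cx (Ordinal (ltnW n_gt1)) (Ordinal n_gt1) isT; rewrite x0 !mxE ltxx.
Qed.

Lemma exists_notin_inj (T : eqType) (f : nat -> T) (s : seq T) :
  injective f -> exists k, f k \notin s.
Proof.
move=> f_inj; set l := [seq f k | k <- iota 0 (size s).+1].
have uniq_l : uniq l by rewrite map_inj_uniq ?iota_uniq.
have : ~~ all (mem s) l.
  by apply/allP => /(uniq_leq_size uniq_l); rewrite size_map size_iota ltnn.
by case/allPn => _ /mapP[k _ ->]; exists k.
Qed.

Lemma scale_succ_inj (F : numFieldType) (V : lmodType F) (v : V) :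
  v != 0 -> injective (fun k : nat => k.+1%:R *: v).
Proof.
move=> v_neq0 k l /eqP; rewrite -subr_eq0 -scalerBl scaler_eq0 (negbTE v_neq0) orbF.
by rewrite subr_eq0 eqr_nat eqSS => /eqP.
Qed.

Theorem theorem3p6 (n : nat) (hn : (3 <= n)%N) :
  forall s : seq 'cV[rat]_(n`!),
    exists p : 'cV[rat]_(n`!),
      p \notin s /\
      forall pi : {perm 'I_n},
        (forall i : 'I_n, val i = n.-1 -> val (pi i) != 0%N) ->
        exists w : 'cV[rat]_n, in_W w /\ in_C pi (Tmat w *m p).
Proof.
case: n hn => [//|m] m_ge2 s.
have ranks (pi : {perm 'I_m.+1}) :
    (forall i : 'I_m.+1, val i = m -> val (pi i) != 0%N) ->
    exists w, in_W w /\ in_C pi (Tmat w *m universal_profile m).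
  by move=> pi_max; apply: universal_profile_ranks => //; exact: pi_max ord_max erefl.
have p_neq0 : universal_profile m != 0.
  have [|w [_ /(in_C_neq0 (ltnW m_ge2))]] := ranks 1%g.
    by move=> i val_i; rewrite perm1 val_i -lt0n ltnW.
  by apply: contraNneq => ->; rewrite mulmx0.
have [k k_notin] := exists_notin_inj s (scale_succ_inj p_neq0).
exists (k.+1%:R *: universal_profile m); split=> // pi /ranks[w [w_W w_C]].
by exists w; split; rewrite // -scalemxAr; apply: in_C_scale.
Qed.
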